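(* Let $\mathbb X$ be a basic space and $\mathcal D=(D,<,\rho)$ a computable partially ordered set. 1. All functions in $\mathrm{Max}_{\mathrm{PR}}[\mathbb X\to\mathcal D]$ and in $\mathrm{Min}_{\mathrm{PR}}[\mathbb X\to\mathcal D]$ are partial computable relative to the oracle $\emptyset'$. In particular, $K^D$ is computable in $\emptyset'$. 2. $K^{\mathcal D}_{\min}$ and $K^{\mathcal D}_{\max}$ are computable in $\emptyset'$.
   Context: $\emptyset'$ denotes the halting set. A basic space is a finite non-empty product of sets each of which is $\mathbb N$, $\mathbb Z$, or $A^*$ for some finite alphabet $A$. A computable partially ordered set is a triple $\mathcal D=(D,<,\rho)$ where $\rho:\mathbb N\to D$ is a bijection and $<$ is a strict partial order on $D$ with $\{(m,n):\rho(m)<\rho(n)\}$ computable; computability of maps into $D$ (possibly relative to an oracle) is via $\rho^{-1}$. For a partial $f:\mathbb X\times\mathbb N\to D$ monotone increasing (resp. decreasing) in its second argument on its domain, $\max^{\mathcal D}f$ (resp. $\min^{\mathcal D}f$) is the partial function defined exactly at those $x$ for which $\{f(x,t):t,\ f(x,t)\text{ defined}\}$ is finite and non-empty, with value its maximum (resp. minimum). $\mathrm{Max}_{\mathrm{PR}}[\mathbb X\to\mathcal D]$ (resp. $\mathrm{Min}_{\mathrm{PR}}[\mathbb X\to\mathcal D]$) is the class of all $\max^{\mathcal D}f$ (resp. $\min^{\mathcal D}f$) with $f$ partial computable and monotone increasing (resp. decreasing) in its second argument. For partial $\varphi:\{0,1\}^*\to D$, $K_\varphi(d)=\min\{|p|:\varphi(p)=d\}$.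 $K^D$ is $K_\varphi$ for $\varphi$ optimal among partial computable functions $\{0,1\}^*\to D$ (for every partial computable $\psi$, $K_\varphi\le K_\psi+c$ wherever $K_\psi$ is defined, for some $c$). $K^{\mathcal D}_{\max}$ is $K_U$ for some fixed $U$ optimal in the same sense within $\mathrm{Max}_{\mathrm{PR}}[\{0,1\}^*\to\mathcal D]$, and $K^{\mathcal D}_{\min}$ is $K^{\mathcal D'}_{\max}$ for the reverse order $\mathcal D'=(D,>,\rho)$. *)

From mathcomp Require Import all_boot.
From mathcomp Require Import all_algebra.
From Stdlib Require List.

Set Implicit Arguments.
Unset Strict Implicit.
Unset Printing Implicit Defensive.

Inductive prog : Type :=
| PZero
| PSucc
| PProj of nat
| POracle
| PComp of prog & seq prog
| PRec of prog & prog
| PMu of prog.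

(* Big-step semantics relative to an oracle O : nat -> Prop.  Programs are
   applied to argument lists; missing arguments default to 0. *)
Inductive eval (O : nat -> Prop) : prog -> seq nat -> nat -> Prop :=
| ev_zero v : eval O PZero v 0
| ev_succ v : eval O PSucc v (head 0 v).+1
| ev_proj i v : eval O (PProj i) v (nth 0 v i)
| ev_orac1 v : O (head 0 v) -> eval O POracle v 1
| ev_orac0 v : ~ O (head 0 v) -> eval O POracle v 0
| ev_comp f gs v ws y :
    evals O gs v ws -> eval O f ws y -> eval O (PComp f gs) v y
| ev_rec0 f g v y : eval O f v y -> eval O (PRec f g) (0 :: v) y
| ev_recS f g n v z y :
    eval O (PRec f g) (n :: v) z -> eval O g (n :: z :: v) y ->
    eval O (PRec f g) (n.+1 :: v) y
| ev_mu f v n :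
    eval O f (n :: v) 0 ->
    (forall m, m < n -> exists k, 0 < k /\ eval O f (m :: v) k) ->
    eval O (PMu f) v n
with evals (O : nat -> Prop) : seq prog -> seq nat -> seq nat -> Prop :=
| evs_nil v : evals O [::] v [::]
| evs_cons g gs v w ws :
    eval O g v w -> evals O gs v ws -> evals O (g :: gs) v (w :: ws).

Definition no_oracle : nat -> Prop := fun _ => False.

Fixpoint prog_code (p : prog) : nat :=
  match p with
  | PZero => CodeSeq.code [:: 0]
  | PSucc => CodeSeq.code [:: 1]
  | PProj i => CodeSeq.code [:: 2; i]
  | POracle => CodeSeq.code [:: 3]
  | PComp f gs => CodeSeq.code [:: 4; prog_code f; CodeSeq.code (map prog_code gs)]
  | PRec f g => CodeSeq.code [:: 5; prog_code f; prog_code g]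
  | PMu f => CodeSeq.code [:: 6; prog_code f]
  end.

Definition halting_set : nat -> Prop :=
  fun e => exists p, prog_code p = e /\ exists y, eval no_oracle p [:: e] y.

(* A partial function A -> B is given by its graph F : A -> B -> Prop.  *)

Definition pc_rel (O : nat -> Prop) (A B : Type) (encA : A -> nat) (encB : B -> nat)
    (F : A -> B -> Prop) : Prop :=
  exists p : prog,
    (forall a b, eval O p [:: encA a] (encB b) <-> F a b) /\
    (forall a m, eval O p [:: encA a] m -> exists b, m = encB b).

Definition graph (A B : Type) (f : A -> option B) : A -> B -> Prop :=
  fun a b => f a = Some b.

(* Basic spaces: finite non-empty products of N, Z, A^* (A finite).     *)

Inductive comp : Type := cN | cZ | cW of nat.

Definition comp_type (c : comp) : Type :=
  match c with cN => nat | cZ => int | cW k => seq 'I_k end.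

Definition int_code (z : int) : nat :=
  match z with Posz n => n.*2 | Negz n => n.*2.+1 end.

Definition comp_code (c : comp) : comp_type c -> nat :=
  match c return comp_type c -> nat with
  | cN => fun n => n
  | cZ => int_code
  | cW k => fun w => CodeSeq.code (map (@nat_of_ord k) w)
  end.

Record bspace : Type := BSpace { bs_head : comp; bs_tail : seq comp }.

Fixpoint bs_type_aux (c : comp) (cs : seq comp) : Type :=
  match cs with
  | [::] => comp_type c
  | c' :: cs' => (comp_type c * bs_type_aux c' cs')%type
  end.

Fixpoint bs_codes_aux (c : comp) (cs : seq comp) : bs_type_aux c cs -> seq nat :=
  match cs return bs_type_aux c cs -> seq nat with
  | [::] => fun x => [:: comp_code x]
  | c' :: cs' => fun x => comp_code x.1 :: bs_codes_aux x.2
  end.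

Definition bs_type (X : bspace) : Type := bs_type_aux (bs_head X) (bs_tail X).
Definition bs_code (X : bspace) (x : bs_type X) : nat := CodeSeq.code (bs_codes_aux x).

Definition bits : bspace := BSpace (cW 2) [::].

Definition pair_code (X : bspace) (xt : bs_type X * nat) : nat :=
  CodeSeq.code [:: bs_code xt.1; xt.2].

Definition computable_poset (D : Type) (lt : D -> D -> Prop)
    (rho : nat -> D) (rhoinv : D -> nat) : Prop :=
  [/\ cancel rho rhoinv, cancel rhoinv rho,
      (forall d, ~ lt d d),
      (forall a b c, lt a b -> lt b c -> lt a c) &
      exists p : prog, forall m n,
        (eval no_oracle p [:: m; n] 1 <-> lt (rho m) (rho n)) /\
        (eval no_oracle p [:: m; n] 0 <-> ~ lt (rho m) (rho n))].

Definition le_of (D : Type) (lt : D -> D -> Prop) (a b : D) : Prop := a = b \/ lt a b.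

Definition pc_fun2 (X : bspace) (D : Type) (rhoinv : D -> nat)
    (f : bs_type X -> nat -> option D) : Prop :=
  pc_rel no_oracle (@pair_code X) rhoinv (fun xt d => f xt.1 xt.2 = Some d).

Definition mono_inc (A D : Type) (lt : D -> D -> Prop) (f : A -> nat -> option D) : Prop :=
  forall x t t' d d', t <= t' -> f x t = Some d -> f x t' = Some d' -> le_of lt d d'.

Definition mono_dec (A D : Type) (lt : D -> D -> Prop) (f : A -> nat -> option D) : Prop :=
  forall x t t' d d', t <= t' -> f x t = Some d -> f x t' = Some d' -> le_of lt d' d.

Definition finite_values (A D : Type) (f : A -> nat -> option D) (x : A) : Prop :=
  exists l : list D, forall t d, f x t = Some d -> List.In d l.

Definition max_graph (A D : Type) (lt : D -> D -> Prop) (f : A -> nat -> option D)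
    : A -> D -> Prop :=
  fun x d => finite_values f x /\ (exists t, f x t = Some d) /\
             (forall t d', f x t = Some d' -> le_of lt d' d).

Definition min_graph (A D : Type) (lt : D -> D -> Prop) (f : A -> nat -> option D)
    : A -> D -> Prop :=
  fun x d => finite_values f x /\ (exists t, f x t = Some d) /\
             (forall t d', f x t = Some d' -> le_of lt d d').

Definition in_MaxPR (X : bspace) (D : Type) (lt : D -> D -> Prop) (rhoinv : D -> nat)
    (g : bs_type X -> D -> Prop) : Prop :=
  exists f, pc_fun2 rhoinv f /\ mono_inc lt f /\
            forall x d, g x d <-> max_graph lt f x d.

Definition in_MinPR (X : bspace) (D : Type) (lt : D -> D -> Prop) (rhoinv : D -> nat)
    (g : bs_type X -> D -> Prop) : Prop :=
  exists f, pc_fun2 rhoinv f /\ mono_dec lt f /\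
            forall x d, g x d <-> min_graph lt f x d.

Definition K_graph (D : Type) (phi : bs_type bits -> D -> Prop) : D -> nat -> Prop :=
  fun d n => (exists p, size p = n /\ phi p d) /\ (forall p, phi p d -> n <= size p).

Definition optimal_in (D : Type) (C : (bs_type bits -> D -> Prop) -> Prop)
    (phi : bs_type bits -> D -> Prop) : Prop :=
  forall psi, C psi -> exists c, forall d n, K_graph psi d n ->
     exists m, K_graph phi d m /\ m <= n + c.

Definition PC_bits (D : Type) (rhoinv : D -> nat) (phi : bs_type bits -> D -> Prop) : Prop :=
  pc_rel no_oracle (@bs_code bits) rhoinv phi.

(* Everything reduces to Sigma_1 questions, which the oracle emptyset' answers.
   Since f(x, .) is monotone, d = max f(x) iff d is a value f(x, t) and no value
   f(x, t') lies strictly above d.  Both "d is a value" and "some value lies above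
   d" are Sigma_1 (a search over t and a step bound of a clocked interpreter), so
   an emptyset'-machine finds max f(x) by testing rho 0, rho 1, ... in turn; min
   is max for the reverse order.  For K_phi(d), "some string of length n is
   mapped to d" is Sigma_1 when phi is partial computable, and is decided by
   checking the 2^n strings of length n when phi = max f is itself
   emptyset'-computable; an emptyset'-search over n then returns K_phi(d). *)

From mathcomp Require Import all_boot.
From mathcomp Require Import zify.
From Stdlib Require List.
From Stdlib Require Import ClassicalEpsilon.

Set Implicit Arguments.
Unset Strict Implicit.
Unset Printing Implicit Defensive.

Definition prog_ind_nested (P : prog -> Prop)
    (H0 : P PZero) (H1 : P PSucc) (H2 : forall i, P (PProj i)) (H3 : P POracle)
    (H4 : forall f gs, P f -> List.Forall P gs -> P (PComp f gs))
    (H5 : forall f g, P f -> P g -> P (PRec f g))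
    (H6 : forall f, P f -> P (PMu f)) : forall p, P p :=
  fix F p := match p with
  | PZero => H0 | PSucc => H1 | PProj i => H2 i | POracle => H3
  | PComp f gs => @H4 f gs (F f) ((fix G l : List.Forall P l := match l with
       | [::] => List.Forall_nil _ | g :: l' => List.Forall_cons _ (F g) (G l') end) gs)
  | PRec f g => @H5 f g (F f) (F g)
  | PMu f => @H6 f (F f)
  end.

Lemma evals_det O gs :
  List.Forall (fun g => forall v y1 y2, eval O g v y1 -> eval O g v y2 -> y1 = y2) gs ->
  forall v ws1 ws2, evals O gs v ws1 -> evals O gs v ws2 -> ws1 = ws2.
Proof.
elim: gs => [|g gs IH] Hgs v ws1 ws2 E1 E2; first by inversion E1; inversion E2.
inversion E1 as [|g1 gs1 v1 w1 ws1' Ew1 Ews1]; inversion E2 as [|g2 gs2 v2 w2 ws2' Ew2 Ews2].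
inversion Hgs as [|g0 gs0 Hg Hgs']; subst.
by rewrite (Hg _ _ _ Ew1 Ew2) (IH Hgs' _ _ _ Ews1 Ews2).
Qed.

Lemma eval_det O p v y1 y2 : eval O p v y1 -> eval O p v y2 -> y1 = y2.
Proof.
elim/prog_ind_nested: p v y1 y2.
- by move=> v y1 y2 H1 H2; inversion H1; inversion H2.
- by move=> v y1 y2 H1 H2; inversion H1; inversion H2.
- by move=> i v y1 y2 H1 H2; inversion H1; inversion H2.
- move=> v y1 y2 H1 H2; inversion H1; inversion H2; subst => //; contradiction.
- move=> f gs IHf IHgs v y1 y2 H1 H2.
  inversion H1 as [| | | | |f1 gs1 v1 ws1 y1' A1 B1| | |].
  inversion H2 as [| | | | |f2 gs2 v2 ws2 y2' A2 B2| | |]; subst.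
  rewrite (evals_det IHgs A1 A2) in B1; exact: IHf B1 B2.
- move=> f g IHf IHg [|n v] y1 y2 H1; first by inversion H1.
  elim: n y1 y2 H1 => [|n IH] y1 y2 H1 H2.
    inversion H1 as [| | | | | |f1 g1 v1 y1' A1| |].
    inversion H2 as [| | | | | |f2 g2 v2 y2' A2| |]; subst; exact: IHf A1 A2.
  inversion H1 as [| | | | | | |f1 g1 n1 v1 z1 y1' A1 B1|].
  inversion H2 as [| | | | | | |f2 g2 n2 v2 z2 y2' A2 B2|]; subst.
  rewrite (IH _ _ A1 A2) in B1; exact: IHg B1 B2.
- move=> f IHf v y1 y2 H1 H2.
  inversion H1 as [| | | | | | | |f1 v1 n1 A1 B1].
  inversion H2 as [| | | | | | | |f2 v2 n2 A2 B2]; subst.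
  case: (ltngtP y1 y2) => // Hlt.
  + have [k [Hk Ek]] := B2 _ Hlt; by rewrite -(IHf _ _ _ A1 Ek) in Hk.
  + have [k [Hk Ek]] := B1 _ Hlt; by rewrite -(IHf _ _ _ A2 Ek) in Hk.
Qed.

Lemma evals_functional O gs v ws1 ws2 : evals O gs v ws1 -> evals O gs v ws2 -> ws1 = ws2.
Proof.
apply: evals_det; elim: gs => [|g gs IH]; constructor => // v' y1 y2; exact: eval_det.
Qed.

(** * A toolkit of primitive recursive programs *)

Lemma eval_eq O p v a b : eval O p v a -> a = b -> eval O p v b.
Proof. by move=> + <-. Qed.

Fixpoint primrec (a : nat) (G : nat -> nat -> nat) (n : nat) : nat :=
  if n is j.+1 then G j (primrec a G j) else a.

Lemma ev_primrec O f g v a G n :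
  eval O f v a -> (forall j z, eval O g [:: j, z & v] (G j z)) ->
  eval O (PRec f g) (n :: v) (primrec a G n).
Proof.
move=> hf hg; elim: n => [|n IH] /=; first exact: ev_rec0.
exact: ev_recS IH (hg _ _).
Qed.

Definition comp1 (F P : prog) : prog := PComp F [:: P].
Definition comp2 (F P Q : prog) : prog := PComp F [:: P; Q].
Definition comp3 (F P Q R : prog) : prog := PComp F [:: P; Q; R].

Lemma ev_comp1 O F P v a y : eval O P v a -> eval O F [:: a] y -> eval O (comp1 F P) v y.
Proof. by move=> hP hF; apply: ev_comp hF; do !constructor. Qed.

Lemma ev_comp2 O F P Q v a b y : eval O P v a -> eval O Q v b ->
  eval O F [:: a; b] y -> eval O (comp2 F P Q) v y.
Proof. by move=> hP hQ hF; apply: ev_comp hF; do !constructor. Qed.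

Lemma ev_comp3 O F P Q R v a b c y : eval O P v a -> eval O Q v b -> eval O R v c ->
  eval O F [:: a; b; c] y -> eval O (comp3 F P Q R) v y.
Proof. by move=> hP hQ hR hF; apply: ev_comp hF; do !constructor. Qed.

Definition csucc (P : prog) : prog := comp1 PSucc P.

Lemma ev_csucc O P v a : eval O P v a -> eval O (csucc P) v a.+1.
Proof. by move=> h; apply: ev_comp1 h _; apply: ev_succ. Qed.

Fixpoint cst (n : nat) : prog := if n is m.+1 then csucc (cst m) else PZero.

Lemma ev_cst O n v : eval O (cst n) v n.
Proof. by elim: n => [|n IH] /=; [apply: ev_zero | apply: ev_csucc]. Qed.

Definition p_add : prog := PRec (PProj 0) (csucc (PProj 1)).

Lemma ev_p_add O a b : eval O p_add [:: a; b] (a + b).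
Proof.
have -> : a + b = primrec b (fun _ z => z.+1) a by elim: a => //= a <-.
by apply: ev_primrec => [|j z]; [apply: ev_proj | apply/ev_csucc/ev_proj].
Qed.

Definition cadd (P Q : prog) : prog := comp2 p_add P Q.

Lemma ev_cadd O P Q v a b : eval O P v a -> eval O Q v b -> eval O (cadd P Q) v (a + b).
Proof. by move=> hP hQ; apply: ev_comp2 hP hQ (ev_p_add _ _ _). Qed.

Definition p_mul : prog := PRec PZero (cadd (PProj 1) (PProj 2)).

Lemma ev_p_mul O a b : eval O p_mul [:: a; b] (a * b).
Proof.
have -> : a * b = primrec 0 (fun _ z => z + b) a by elim: a => //= a <-; rewrite mulSn addnC.
by apply: ev_primrec => [|j z]; [apply: ev_zero | apply: ev_cadd; apply: ev_proj].
Qed.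

Definition cmul (P Q : prog) : prog := comp2 p_mul P Q.

Lemma ev_cmul O P Q v a b : eval O P v a -> eval O Q v b -> eval O (cmul P Q) v (a * b).
Proof. by move=> hP hQ; apply: ev_comp2 hP hQ (ev_p_mul _ _ _). Qed.

Definition p_pow2 : prog := PRec (cst 1) (cadd (PProj 1) (PProj 1)).

Lemma ev_p_pow2 O a : eval O p_pow2 [:: a] (2 ^ a).
Proof.
have -> : 2 ^ a = primrec 1 (fun _ z => z + z) a.
  by elim: a => //= a <-; rewrite expnS mul2n addnn.
by apply: ev_primrec => [|j z]; [apply: ev_cst | apply: ev_cadd; apply: ev_proj].
Qed.

Definition cpow2 (P : prog) : prog := comp1 p_pow2 P.

Lemma ev_cpow2 O P v a : eval O P v a -> eval O (cpow2 P) v (2 ^ a).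
Proof. by move=> hP; apply: ev_comp1 hP (ev_p_pow2 _ _). Qed.

Definition p_pred : prog := PRec PZero (PProj 0).

Lemma ev_p_pred O a : eval O p_pred [:: a] a.-1.
Proof.
have -> : a.-1 = primrec 0 (fun j _ => j) a by case: a.
by apply: ev_primrec => [|j z]; [apply: ev_zero | apply: ev_proj].
Qed.

Definition cpred (P : prog) : prog := comp1 p_pred P.

Lemma ev_cpred O P v a : eval O P v a -> eval O (cpred P) v a.-1.
Proof. by move=> hP; apply: ev_comp1 hP (ev_p_pred _ _). Qed.

Definition p_subr : prog := PRec (PProj 0) (cpred (PProj 1)).

Lemma ev_p_subr O a b : eval O p_subr [:: a; b] (b - a).
Proof.
have -> : b - a = primrec b (fun _ z => z.-1) a by elim: a => //= [|a <-]; rewrite ?subn0 ?subnS.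
by apply: ev_primrec => [|j z]; [apply: ev_proj | apply/ev_cpred/ev_proj].
Qed.

Definition csub (P Q : prog) : prog := comp2 p_subr Q P.

Lemma ev_csub O P Q v a b : eval O P v a -> eval O Q v b -> eval O (csub P Q) v (a - b).
Proof. by move=> hP hQ; apply: ev_comp2 hQ hP (ev_p_subr _ _ _). Qed.

Definition p_eq0 : prog := PRec (cst 1) PZero.

Lemma ev_p_eq0 O a : eval O p_eq0 [:: a] (a == 0).
Proof.
have -> : nat_of_bool (a == 0) = primrec 1 (fun _ _ => 0) a by case: a.
by apply: ev_primrec => [|j z]; [apply: ev_cst | apply: ev_zero].
Qed.

Definition ceq0 (P : prog) : prog := comp1 p_eq0 P.

Lemma ev_ceq0 O P v a : eval O P v a -> eval O (ceq0 P) v (a == 0).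
Proof. by move=> hP; apply: ev_comp1 hP (ev_p_eq0 _ _). Qed.

Definition cneq0 (P : prog) : prog := ceq0 (ceq0 P).

Lemma ev_cneq0 O P v a : eval O P v a -> eval O (cneq0 P) v (a != 0).
Proof. by move=> h; have := ev_ceq0 (ev_ceq0 h); case: (a). Qed.

Definition p_if : prog := PRec (PProj 0) (PProj 3).

Lemma ev_p_if O a b c : eval O p_if [:: a; b; c] (if a is 0 then b else c).
Proof.
have -> : (if a is 0 then b else c) = primrec b (fun _ _ => c) a by case: a.
by apply: ev_primrec => [|j z]; apply: ev_proj.
Qed.

Definition cif (P Q R : prog) : prog := comp3 p_if P Q R.

Lemma ev_cif O P Q R v a b c : eval O P v a -> eval O Q v b -> eval O R v c ->
  eval O (cif P Q R) v (if a is 0 then b else c).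
Proof. by move=> hP hQ hR; apply: ev_comp3 hP hQ hR (ev_p_if _ _ _ _). Qed.

Definition ceq (P Q : prog) : prog := ceq0 (cadd (csub P Q) (csub Q P)).

Lemma ev_ceq O P Q v a b : eval O P v a -> eval O Q v b -> eval O (ceq P Q) v (a == b).
Proof.
move=> hP hQ; have := ev_ceq0 (ev_cadd (ev_csub hP hQ) (ev_csub hQ hP)).
by rewrite addn_eq0 !subn_eq0 -eqn_leq.
Qed.

Definition projs (a k : nat) : seq prog := [seq PProj i | i <- iota a k].

Lemma evs_projs O pre ps k : size ps = k -> evals O (projs (size pre) k) (pre ++ ps) ps.
Proof.
move=> <-.
have evs_nth a l v : evals O (projs a l) v [seq nth 0 v i | i <- iota a l].
  by elim: l a => [|l IH] a /=; constructor; [apply: ev_proj | apply: IH].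
have E : ps = [seq nth 0 (pre ++ ps) i | i <- iota (size pre) (size ps)].
  rewrite -[size pre]addn0 iotaDl -map_comp -{1}[ps](mkseq_nth 0).
  by apply: eq_map => i /=; rewrite nth_cat ltnNge leq_addr /= addKn.
by rewrite {3}E; apply: evs_nth.
Qed.

(* Natural-number codes of sequences: [CodeSeq.code (x :: s)] is convertible to
   [cons_code x (CodeSeq.code s)]. *)
Definition cons_code (x c : nat) : nat := 2 ^ x * c.*2.+1.
Definition ccons (P Q : prog) : prog := cmul (cpow2 P) (csucc (cadd Q Q)).

Lemma ev_ccons O P Q v a b :
  eval O P v a -> eval O Q v b -> eval O (ccons P Q) v (cons_code a b).
Proof.
move=> hP hQ; rewrite /cons_code -addnn.
exact: ev_cmul (ev_cpow2 hP) (ev_csucc (ev_cadd hQ hQ)).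
Qed.

(** * A clocked interpreter *)

Fixpoint all_some (l : seq (option nat)) : option (seq nat) :=
  match l with
  | [::] => Some [::]
  | o :: l' => match o, all_some l' with Some y, Some ys => Some (y :: ys) | _, _ => None end
  end.

Fixpoint oprimrec (a : option nat) (G : nat -> nat -> option nat) (n : nat) : option nat :=
  if n is j.+1 then obind (G j) (oprimrec a G j) else a.

(* [mu_scan h j] is [m.+2] if [h m = Some 0] is the first zero below [j] and all
   earlier values are defined, [1] if an undefined value comes first, and [0] if
   all values below [j] are defined and nonzero. *)
Fixpoint mu_scan (h : nat -> option nat) (j : nat) : nat :=
  if j is j'.+1 then
    (let r := mu_scan h j' in
     if r is 0 then (match h j' with None => 1 | Some 0 => j'.+2 | Some _ => 0 end) else r)
  else 0.

(* [run s p v] runs [p] on [v] with clock [s], answering every oracle query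
   negatively; it is only used for oracle-free programs. *)
Fixpoint run (s : nat) (p : prog) (v : seq nat) {struct p} : option nat :=
  match p with
  | PZero => Some 0
  | PSucc => Some (head 0 v).+1
  | PProj i => Some (nth 0 v i)
  | POracle => Some 0
  | PComp f gs => obind (run s f) (all_some (map (fun g => run s g v) gs))
  | PRec f g => if v is n :: v' then oprimrec (run s f v') (fun j z => run s g [:: j, z & v']) n
                else None
  | PMu f => if mu_scan (fun m => run s f (m :: v)) s is m.+2 then Some m else None
  end.

Lemma mu_scan_eq0 h j : mu_scan h j = 0 <-> (forall i, i < j -> exists a, h i = Some a.+1).
Proof.
elim: j => [|j IH] /=; first by split => // _ i.
case E: (mu_scan h j) => [|r]; last first.
  split => // H; suff : mu_scan h j = 0 by rewrite E.
  by apply/IH => i Hi; apply/H/ltnW.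
have IH' := proj1 IH E.
case Ehj: (h j) => [[|a]|]; split => //.
- by move=> /(_ j (ltnSn _)) [a]; rewrite Ehj.
- move=> _ i; rewrite ltnS leq_eqVlt => /orP [/eqP -> | /IH'] //; by exists a.
- by move=> /(_ j (ltnSn _)) [a]; rewrite Ehj.
Qed.

Lemma mu_scanP h j m : mu_scan h j = m.+2 <->
  [/\ m < j, h m = Some 0 & forall i, i < m -> exists a, h i = Some a.+1].
Proof.
elim: j => [|j IH] /=; first by split => // -[].
case E: (mu_scan h j) => [|r]; last first.
  rewrite -E; split; first by move/IH => [H1 H2 H3]; split => //; apply: ltnW.
  case; rewrite ltnS leq_eqVlt => /orP [/eqP ->|Hm] Hh Hi; last by apply/IH.
  by have := proj2 (mu_scan_eq0 h j) Hi; rewrite E.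
have Z := proj1 (mu_scan_eq0 h j) E.
have below_j i : i < j -> h i = Some 0 -> False.
  by move=> /Z [a Ha]; rewrite Ha.
case Ehj: (h j) => [[|a]|]; split => //.
- by case=> <-.
- by case; rewrite ltnS leq_eqVlt => /orP [/eqP -> //|/below_j].
- by case; rewrite ltnS leq_eqVlt => /orP [/eqP ->|/below_j]; rewrite ?Ehj.
- by case; rewrite ltnS leq_eqVlt => /orP [/eqP ->|/below_j]; rewrite ?Ehj.
Qed.

Definition oleq (T : Type) (o o' : option T) : Prop := forall y, o = Some y -> o' = Some y.

Lemma oprimrec_mono a a' G G' n : oleq a a' -> (forall j z, oleq (G j z) (G' j z)) ->
  oleq (oprimrec a G n) (oprimrec a' G' n).
Proof.
move=> ha hG; elim: n => [|n IH] //= y.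
by case E: (oprimrec a G n) => [z|] //= Hz; rewrite (IH _ E) /=; apply: hG.
Qed.

Lemma all_some_mono (F F' : prog -> option nat) gs :
  (forall g, oleq (F g) (F' g)) -> oleq (all_some (map F gs)) (all_some (map F' gs)).
Proof.
move=> hF; elim: gs => [|g gs IH] ws //=.
case E1: (F g) => [w|] //; case E2: (all_some _) => [ws'|] // [<-].
by rewrite (hF _ _ E1) (IH _ E2).
Qed.

Lemma run_mono s s' p v : s <= s' -> oleq (run s p v) (run s' p v).
Proof.
move=> ss'; elim/prog_ind_nested: p v.
- by move=> v y /= ->.
- by move=> v y /= ->.
- by move=> i v y /= ->.
- by move=> v y /= ->.
- move=> f gs IHf IHgs v y /=.
  case E: (all_some _) => [ws|] //= Hy.
  suff -> : all_some [seq run s' g v | g <- gs] = Some ws by apply: IHf.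
  elim: gs IHgs ws E {Hy} => [|g gs IH] Hgs ws //=.
  inversion Hgs as [|g0 gs0 Hg Hgs']; subst.
  case E1: (run s g v) => [w|] //; case E2: (all_some _) => [ws'|] // [<-].
  by rewrite (Hg _ _ E1) (IH Hgs' _ E2).
- by move=> f g IHf IHg [|n v] //=; apply: oprimrec_mono => // j z; apply: IHg.
- move=> f IHf v y /=.
  case E: (mu_scan _ s) => [|[|m]] // [<-].
  move/mu_scanP: E => [H1 H2 H3].
  suff -> : mu_scan (fun m0 => run s' f (m0 :: v)) s' = m.+2 by [].
  apply/mu_scanP; split; [exact: leq_trans H1 ss' | exact: IHf |].
  by move=> i /H3 [a Ha]; exists a; apply: IHf.
Qed.

Lemma run_sound s p v y : run s p v = Some y -> eval no_oracle p v y.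
Proof.
elim/prog_ind_nested: p v y.
- by move=> v y [<-]; apply: ev_zero.
- by move=> v y [<-]; apply: ev_succ.
- by move=> i v y [<-]; apply: ev_proj.
- by move=> v y [<-]; apply: ev_orac0.
- move=> f gs IHf IHgs v y /=.
  case E: (all_some _) => [ws|] //= Hy.
  apply: ev_comp (IHf _ _ Hy).
  elim: gs IHgs ws E {IHf Hy} => [|g gs IH] Hgs ws /=; first by move=> [<-]; constructor.
  inversion Hgs as [|g0 gs0 Hg Hgs']; subst.
  case E1: (run s g v) => [w|] //; case E2: (all_some _) => [ws'|] // [<-].
  by constructor; [apply: Hg | apply: IH].
- move=> f g IHf IHg [|n v] //= y.
  elim: n y => [|n IH] y /=; first by move=> H; apply/ev_rec0/IHf.
  case E: (oprimrec _ _ n) => [z|] //= Hy.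
  exact: ev_recS (IH _ E) (IHg _ _ Hy).
- move=> f IHf v y /=.
  case E: (mu_scan _ s) => [|[|m]] // [<-].
  move/mu_scanP: E => [H1 H2 H3].
  apply: ev_mu; first exact: IHf H2.
  by move=> i /H3 [a Ha]; exists a.+1; split => //; apply: IHf Ha.
Qed.

Lemma clock_bound (Q : nat -> nat -> Prop) n :
  (forall m s s', s <= s' -> Q m s -> Q m s') ->
  (forall m, m < n -> exists s, Q m s) -> exists S, forall m, m < n -> Q m S.
Proof.
move=> Hm; elim: n => [|n IH] H; first by exists 0.
have [S1 HS1] : exists S, forall m, m < n -> Q m S by apply: IH => m Hm'; apply/H/ltnW.
have [S2 HS2] := H n (ltnSn _).
exists (maxn S1 S2) => m; rewrite ltnS leq_eqVlt => /orP [/eqP ->|Hlt].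
  exact: Hm (leq_maxr _ _) HS2.
exact: Hm (leq_maxl _ _) (HS1 _ Hlt).
Qed.

Section RunComplete.

Variable f : prog.
Hypothesis IHf : forall v y, eval no_oracle f v y -> exists s, run s f v = Some y.

Lemma run_complete_mu v y : eval no_oracle (PMu f) v y -> exists s, run s (PMu f) v = Some y.
Proof.
move=> H; inversion H as [| | | | | | | |ff vv n A1 B1]; subst.
have [s0 Hs0] := IHf A1.
have [S HS] : exists S, forall m, m < y -> exists a, run S f (m :: v) = Some a.+1.
  apply: clock_bound => [m s s' ss' [a Ha]|m /B1 [[|k] [Hk Ek]] //].
    by exists a; exact (run_mono ss' Ha).
  by have [s Hs] := IHf Ek; exists s, k.
pose T := maxn (maxn s0 S) y.+1.
have [h1 h2 h3] : [/\ s0 <= T, S <= T & y < T] by rewrite /T !leq_max !leqnn !orbT.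
exists T => /=; suff -> : mu_scan (fun m => run T f (m :: v)) T = y.+2 by [].
apply/mu_scanP; split => //; first exact (run_mono h1 Hs0).
by move=> i /HS [a Ha]; exists a; exact (run_mono h2 Ha).
Qed.

End RunComplete.

Lemma run_complete_all gs v ws :
  List.Forall (fun g => forall v y, eval no_oracle g v y -> exists s, run s g v = Some y) gs ->
  evals no_oracle gs v ws -> exists s, all_some [seq run s g v | g <- gs] = Some ws.
Proof.
elim: gs ws => [|g gs IH] ws Hgs A; first by inversion A; exists 0.
inversion Hgs as [|g0 gs0 Hg Hgs']; subst.
inversion A as [|g1 gs1 v1 w ws' Ew Ews]; subst.
have [t1 Ht1] := Hg _ _ Ew; have [t2 Ht2] := IH _ Hgs' Ews.
exists (maxn t1 t2) => /=; rewrite (run_mono (leq_maxl t1 t2) Ht1).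
by rewrite (all_some_mono (fun g => @run_mono _ _ g v (leq_maxr t1 t2)) Ht2).
Qed.

Lemma run_complete p v y : eval no_oracle p v y -> exists s, run s p v = Some y.
Proof.
elim/prog_ind_nested: p v y.
- by move=> v y H; inversion H; exists 0.
- by move=> v y H; inversion H; exists 0.
- by move=> i v y H; inversion H; exists 0.
- move=> v y H; inversion H as [| | |v1 Hv|v1 Hv| | | |]; first by [].
  by exists 0.
- move=> f gs IHf IHgs v y H.
  inversion H as [| | | | |ff gg vv ws yy A B| | |]; subst.
  have [s1 Hs1] := IHf _ _ B.
  have [s2 Hs2] := run_complete_all IHgs A.
  exists (maxn s1 s2) => /=.
  rewrite (all_some_mono (fun g => @run_mono _ _ g v (leq_maxr s1 s2)) Hs2) /=.
  exact (run_mono (leq_maxl _ _) Hs1).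
- move=> f g IHf IHg [|n v] y H; first by inversion H.
  elim: n y H => [|n IH] y H.
    by inversion H as [| | | | | |ff gg vv yy A| |]; subst; apply: IHf.
  inversion H as [| | | | | | |ff gg nn vv z yy A B|]; subst.
  have [s1 Hs1] := IH _ A; have [s2 Hs2] := IHg _ _ B.
  exists (maxn s1 s2); move: (run_mono (leq_maxl s1 s2) Hs1) => /= ->.
  exact (run_mono (leq_maxr _ _) Hs2).
- by move=> f IHf v y; apply: run_complete_mu.
Qed.

(** * The clocked interpreter is primitive recursive *)

Definition ocode (o : option nat) : nat := if o is Some y then y.+1 else 0.

Definition cprod (l : seq prog) : prog := foldr cmul (cst 1) l.

Lemma ev_cprod O l v ws : evals O l v ws -> eval O (cprod l) v (foldr muln 1 ws).
Proof. by elim=> [v0|g gs v0 w ws0 Hg Hgs IH]; [apply: (ev_cst O 1) | apply: ev_cmul]. Qed.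

Lemma evs_cpred O l v ws : evals O l v ws -> evals O (map cpred l) v (map predn ws).
Proof. by elim=> [v0|g gs v0 w ws0 Hg Hgs IH] /=; constructor => //; apply: ev_cpred. Qed.

(* Programs compiled for clock [s] read their input as [s :: v] and output
   [ocode (run s p v)]; the arity [k = size v] is needed to move the clock past
   the extra arguments introduced by [PRec] and [PMu]. *)
Definition clocked_rec_step (Cg : prog) (k : nat) : prog := cif (PProj 1) (cst 0)
  (PComp Cg [:: PProj 2, PProj 0, cpred (PProj 1) & projs 3 k]).

Definition clocked_mu_step (Cf : prog) (k : nat) : prog :=
  let H := PComp Cf (PProj 2 :: PProj 0 :: projs 3 k) in
  cif (PProj 1) (cif H (cst 1) (cif (cpred H) (csucc (csucc (PProj 0))) (cst 0))) (PProj 1).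

Fixpoint clocked (p : prog) (k : nat) {struct p} : prog :=
  match p with
  | PZero => cst 1
  | PSucc => csucc (csucc (PProj 1))
  | PProj i => csucc (PProj i.+1)
  | POracle => cst 1
  | PComp f gs => cif (cprod (map (fun g => clocked g k) gs)) (cst 0)
      (PComp (clocked f (size gs)) (PProj 0 :: map cpred (map (fun g => clocked g k) gs)))
  | PRec f g => if k is k'.+1 then
      PComp (PRec (clocked f k') (clocked_rec_step (clocked g k'.+2) k'))
            (PProj 1 :: PProj 0 :: projs 2 k')
      else cst 0
  | PMu f => cpred (PComp (PRec (cst 0) (clocked_mu_step (clocked f k.+1) k))
                          (PProj 0 :: PProj 0 :: projs 1 k))
  end.

Lemma all_some_map l ws : all_some l = Some ws -> l = map Some ws.
Proof.
elim: l ws => [|o l IH] ws /=; first by case=> <-.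
by case: o => // a; case E: (all_some l) => [ws'|] // [<-] /=; rewrite (IH _ E).
Qed.

Lemma all_some_None l : all_some l = None -> foldr muln 1 (map ocode l) = 0.
Proof.
elim: l => [|o l IH] //=; case: o => [a|] /=; last by rewrite mul0n.
by case E: (all_some l) => //= _; rewrite IH // muln0.
Qed.

Section ClockedCorrect.

Variable O : nat -> Prop.

Lemma clocked_comp_correct f gs k s v :
  (forall ws, size ws = size gs ->
     eval O (clocked f (size gs)) (s :: ws) (ocode (run s f ws))) ->
  evals O [seq clocked g k | g <- gs] (s :: v) [seq ocode (run s g v) | g <- gs] ->
  eval O (clocked (PComp f gs) k) (s :: v) (ocode (run s (PComp f gs) v)).
Proof.
move=> IHf; rewrite (_ : [seq ocode _ | _ <- _] = map ocode [seq run s g v | g <- gs]);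
  last by rewrite -map_comp.
move=> E /=.
set lo := [seq run s g v | g <- gs] in E *.
have Hlo : size lo = size gs by rewrite size_map.
have Hcomp ws : size ws = size gs ->
    evals O [seq cpred Cg | Cg <- [seq clocked g k | g <- gs]] (s :: v) ws ->
    eval O (PComp (clocked f (size gs))
                  (PProj 0 :: [seq cpred Cg | Cg <- [seq clocked g k | g <- gs]]))
      (s :: v) (ocode (run s f ws)).
  by move=> Hws Ews; apply: ev_comp (IHf _ Hws); constructor => //; apply: ev_proj.
have Ecpred := evs_cpred E.
case E2: (all_some lo) => [ws|] /=.
  have El := all_some_map E2; rewrite El -map_comp in E Ecpred; rewrite El size_map in Hlo.
  have pos : 0 < foldr muln 1 (map (ocode \o Some) ws).
    by elim: (ws) => //= a ws' IH; rewrite muln_gt0 IH.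
  have Hpred : map predn (map (ocode \o Some) ws) = ws by elim: (ws) => //= a ws' ->.
  rewrite Hpred in Ecpred.
  have := ev_cif (ev_cprod E) (ev_cst O 0 _) (Hcomp ws Hlo _).
  by move: Ecpred pos; case: (foldr muln 1 _) => // n Ecpred _ /(_ Ecpred).
have Hsize : size (map predn (map ocode lo)) = size gs by rewrite !size_map.
by have := ev_cif (ev_cprod E) (ev_cst O 0 _) (Hcomp _ Hsize Ecpred); rewrite all_some_None.
Qed.

Lemma clocked_rec_correct f g k s n v : size v = k ->
  eval O (clocked f k) (s :: v) (ocode (run s f v)) ->
  (forall j z, eval O (clocked g k.+2) [:: s, j, z & v] (ocode (run s g [:: j, z & v]))) ->
  eval O (clocked (PRec f g) k.+1) [:: s, n & v] (ocode (run s (PRec f g) (n :: v))).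
Proof.
move=> Hv Hf Hg /=.
pose G j z := if z is 0 then 0 else ocode (run s g [:: j, z.-1 & v]).
have HG j z : eval O (clocked_rec_step (clocked g k.+2) k) [:: j, z & s :: v] (G j z).
  apply: ev_cif; [apply: ev_proj | apply: ev_cst |].
  apply: ev_comp (Hg j z.-1); apply: evs_cons; first exact: ev_proj.
  apply: evs_cons; first exact: ev_proj.
  apply: evs_cons; first exact/ev_cpred/ev_proj.
  exact: (evs_projs O [:: j; z; s] Hv).
have -> : ocode (oprimrec (run s f v) (fun j z => run s g [:: j, z & v]) n) =
          primrec (ocode (run s f v)) G n.
  by elim: n {HG} => [|n IH] //=; rewrite -IH /G; case: (oprimrec _ _ n).
apply: ev_comp (ev_primrec n Hf HG); apply: evs_cons; first exact: ev_proj.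
apply: evs_cons; first exact: ev_proj.
exact: (evs_projs O [:: s; n] Hv).
Qed.

Lemma clocked_mu_correct f k s v : size v = k ->
  (forall j, eval O (clocked f k.+1) [:: s, j & v] (ocode (run s f (j :: v)))) ->
  eval O (clocked (PMu f) k) (s :: v) (ocode (run s (PMu f) v)).
Proof.
move=> Hv Hf /=; pose h m := run s f (m :: v).
pose G j r := if r is 0 then
    (if ocode (h j) is 0 then 1 else if (ocode (h j)).-1 is 0 then j.+2 else 0) else r.
have HG j r : eval O (clocked_mu_step (clocked f k.+1) k) [:: j, r & s :: v] (G j r).
  have HH : eval O (PComp (clocked f k.+1) (PProj 2 :: PProj 0 :: projs 3 k))
      [:: j, r, s & v] (ocode (h j)).
    apply: ev_comp (Hf j); apply: evs_cons; first exact: ev_proj.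
    apply: evs_cons; first exact: ev_proj.
    exact: (evs_projs O [:: j; r; s] Hv).
  exact: ev_cif (ev_proj _ _ _) (ev_cif HH (ev_cst _ _ _)
     (ev_cif (ev_cpred HH) (ev_csucc (ev_csucc (ev_proj _ _ _))) (ev_cst _ _ _)))
     (ev_proj _ _ _).
have Escan : primrec 0 G s = mu_scan h s.
  elim: (s) => [|j IH] //=; rewrite IH /G.
  by case: (mu_scan h j) => //; case: (h j) => [[|a]|].
suff : eval O (PComp (PRec (cst 0) (clocked_mu_step (clocked f k.+1) k))
     (PProj 0 :: PProj 0 :: projs 1 k)) (s :: v) (mu_scan h s).
  by move/ev_cpred; rewrite /h; case: (mu_scan _ s) => [|[|m]].
rewrite -Escan; apply: ev_comp (ev_primrec s (ev_cst O 0 (s :: v)) HG).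
apply: evs_cons; first exact: ev_proj.
apply: evs_cons; first exact: ev_proj.
exact: (evs_projs O [:: s] Hv).
Qed.

Lemma clocked_correct p k s v : size v = k ->
  eval O (clocked p k) (s :: v) (ocode (run s p v)).
Proof.
elim/prog_ind_nested: p k s v.
- by move=> k s v _; apply: (ev_cst O 1).
- by move=> k s v _ /=; have := ev_csucc (ev_csucc (ev_proj O 1 (s :: v))); case: v.
- by move=> i k s v _; apply/ev_csucc/ev_proj.
- by move=> k s v _; apply: (ev_cst O 1).
- move=> f gs IHf IHgs k s v Hv; apply: clocked_comp_correct => [ws|]; first exact: IHf.
  elim: gs IHgs {IHf} => [|g gs IH] Hgs /=; first by constructor.
  by inversion Hgs; subst; constructor; [apply: H1 | apply: IH].
- move=> f g IHf IHg [|k] s [|n v] //= Hv; first exact: ev_zero.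
  by case: Hv => Hv; apply: clocked_rec_correct => // *; [apply: IHf | apply: IHg; rewrite /= Hv].
- by move=> f IHf k s v Hv; apply: clocked_mu_correct => // j; apply: IHf; rewrite /= Hv.
Qed.

End ClockedCorrect.

(** * Querying the halting set *)

Lemma prog_code_inj : injective prog_code.
Proof.
have code_inj := can_inj CodeSeq.codeK.
elim/prog_ind_nested.
- by case=> [||j||f' gs'|f' g'|f'] /code_inj.
- by case=> [||j||f' gs'|f' g'|f'] /code_inj.
- by move=> i; case=> [||j||f' gs'|f' g'|f'] /code_inj // [->].
- by case=> [||j||f' gs'|f' g'|f'] /code_inj.
- move=> f gs IHf IHgs; case=> [||j||f' gs'|f' g'|f'] /code_inj //= [/IHf -> /code_inj E].
  congr PComp; elim: gs IHgs gs' E {IHf} => [|g gs IH] Hgs [|g' gs'] //= [E1 E2].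
  by inversion Hgs as [|g0 gs0 Hg Hgs']; subst; rewrite (Hg _ E1) (IH Hgs' _ E2).
- by move=> f g IHf IHg; case=> [||j||f' gs'|f' g'|f'] /code_inj //= [/IHf -> /IHg ->].
- by move=> f IHf; case=> [||j||f' gs'|f' g'|f'] /code_inj //= [/IHf ->].
Qed.

Definition p_code_cst : prog := PRec (cst 1)
  (ccons (cst 4) (ccons (ccons (cst 1) (cst 0)) (ccons (ccons (PProj 1) (cst 0)) (cst 0)))).

Lemma ev_p_code_cst O n : eval O p_code_cst [:: n] (prog_code (cst n)).
Proof.
have -> : prog_code (cst n) = primrec 1 (fun _ z =>
   cons_code 4 (cons_code (cons_code 1 0) (cons_code (cons_code z 0) 0))) n.
  by elim: n => //= n <-.
apply: ev_primrec => [|j z]; first exact: ev_cst.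
apply: ev_ccons; first exact: ev_cst.
apply: ev_ccons; first by apply: ev_ccons; apply: ev_cst.
apply: ev_ccons; last exact: ev_cst.
by apply: ev_ccons; [apply: ev_proj | apply: ev_cst].
Qed.

(* Turns the question whether [S] halts on [[:: a; b]] into a query to the
   halting set. *)
Definition close2 (S : prog) (a b : nat) : prog := PComp S [:: cst a; cst b].

Definition cclose2_code (cS : nat) (A B : prog) : prog := ccons (cst 4) (ccons (cst cS)
   (ccons (ccons (comp1 p_code_cst A) (ccons (comp1 p_code_cst B) (cst 0))) (cst 0))).

Lemma ev_cclose2_code O S A B v a b : eval O A v a -> eval O B v b ->
  eval O (cclose2_code (prog_code S) A B) v (prog_code (close2 S a b)).
Proof.
move=> hA hB.
have -> : prog_code (close2 S a b) = cons_code 4 (cons_code (prog_code S)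
   (cons_code (cons_code (prog_code (cst a)) (cons_code (prog_code (cst b)) 0)) 0)) by [].
apply: ev_ccons; first exact: ev_cst.
apply: ev_ccons; first exact: ev_cst.
apply: ev_ccons; last exact: ev_cst.
apply: ev_ccons; first exact: ev_comp1 hA (ev_p_code_cst _ _).
by apply: ev_ccons; [apply: ev_comp1 hB (ev_p_code_cst _ _) | apply: ev_cst].
Qed.

Definition halts (S : prog) (a b : nat) : Prop := exists y, eval no_oracle S [:: a; b] y.

Lemma halting_set_close2 S a b : halting_set (prog_code (close2 S a b)) <-> halts S a b.
Proof.
have csts v : evals no_oracle [:: cst a; cst b] v [:: a; b].
  by apply: evs_cons (ev_cst _ _ _) (evs_cons (ev_cst _ _ _) (evs_nil _ _)).
split; last by move=> [y Hy]; exists (close2 S a b); split => //; exists y; apply: ev_comp Hy.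
move=> [p [/prog_code_inj -> [y Hy]]].
inversion Hy as [| | | | |ff gg vv ws yy A B| | |]; subst.
by rewrite (evals_functional A (csts _)) in B; exists y.
Qed.

Definition bool_of_prop (P : Prop) : bool :=
  if excluded_middle_informative P then true else false.

Lemma bool_of_propP (P : Prop) : reflect P (bool_of_prop P).
Proof. by rewrite /bool_of_prop; case: excluded_middle_informative => H; constructor. Qed.

Definition cquery (S A B : prog) : prog := comp1 POracle (cclose2_code (prog_code S) A B).

Lemma ev_cquery S A B v a b : eval halting_set A v a -> eval halting_set B v b ->
  eval halting_set (cquery S A B) v (bool_of_prop (halts S a b)).
Proof.
move=> hA hB; apply: ev_comp1 (ev_cclose2_code S hA hB) _.
case: bool_of_propP => H; [apply: ev_orac1 | apply: ev_orac0];
  by rewrite /= halting_set_close2.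
Qed.

Lemma ev_PMuP O F v (fv : nat -> nat) : (forall j, eval O F (j :: v) (fv j)) ->
  forall y, eval O (PMu F) v y <-> (fv y = 0 /\ forall m, m < y -> fv m <> 0).
Proof.
move=> hF y; split.
  move=> H; inversion H as [| | | | | | | |ff vv n A1 B1]; subst.
  split; first by rewrite (eval_det (hF y) A1).
  by move=> m /B1 [k [Hk Ek]]; rewrite (eval_det (hF m) Ek); case: (k) Hk.
move=> [H1 H2]; apply: ev_mu; first by rewrite -H1.
by move=> m /H2 Hm; exists (fv m); split; [case: (fv m) Hm | apply: hF].
Qed.

Lemma ev_PMu_halts O F v (fv : nat -> nat) : (forall j, eval O F (j :: v) (fv j)) ->
  (exists y, eval O (PMu F) v y) <-> exists j, fv j = 0.
Proof.
move=> hF; split; first by move=> [y /(ev_PMuP hF) [H _]]; exists y.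
move=> Hex; have Hex' : exists j, fv j == 0 by case: Hex => j Hj; exists j; apply/eqP.
exists (ex_minn Hex'); apply/(ev_PMuP hF).
case: ex_minnP => m /eqP Hm Hmin; split => // i Hi /eqP Hi0.
by have := Hmin i Hi0; rewrite leqNgt Hi.
Qed.

Definition cbounded_has (T : prog) (k : nat) : prog := PRec (cneq0 (PComp T (cst 0 :: projs 0 k)))
  (cif (PProj 1) (cneq0 (PComp T (csucc (PProj 0) :: projs 2 k))) (cst 1)).

Lemma ev_cbounded_has O T k ps (tv : nat -> nat) : size ps = k ->
  (forall i, eval O T (i :: ps) (tv i)) ->
  forall top, eval O (cbounded_has T k) (top :: ps) (has (fun i => tv i != 0) (iota 0 top.+1)).
Proof.
move=> Hk hT top.
have -> : nat_of_bool (has (fun i => tv i != 0) (iota 0 top.+1)) =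
   primrec (tv 0 != 0) (fun j r => if r is 0 then nat_of_bool (tv j.+1 != 0) else 1) top.
  elim: top => [|j IH]; first by rewrite /= orbF.
  rewrite [RHS]/= -IH -[j.+2]addn1 iotaD has_cat add0n.
  by case: has => //=; rewrite orbF.
apply: ev_primrec => [|j z].
  apply/ev_cneq0/ev_comp/hT; apply: evs_cons; first exact: ev_cst.
  exact: (evs_projs O [::] Hk).
apply: ev_cif; [exact: ev_proj | | exact: ev_cst].
apply/ev_cneq0/ev_comp/hT; apply: evs_cons; first exact/ev_csucc/ev_proj.
exact: (evs_projs O [:: j; z] Hk).
Qed.

(* Dovetailing: stage [j] of the search tests the pairs [(t, j)] with [t <= j]. *)
Definition csearch (T : prog) (k : nat) : prog :=
  PMu (ceq0 (PComp (cbounded_has T k.+1) (PProj 0 :: PProj 0 :: projs 1 k))).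

Lemma csearch_halts O T k ps (tv : nat -> nat -> nat) : size ps = k ->
  (forall t s, eval O T [:: t, s & ps] (tv t s)) ->
  (exists y, eval O (csearch T k) ps y) <-> exists j t, t <= j /\ tv t j != 0.
Proof.
move=> Hk hT.
have hF j : eval O (ceq0 (PComp (cbounded_has T k.+1) (PProj 0 :: PProj 0 :: projs 1 k)))
     (j :: ps) (nat_of_bool (has (fun t => tv t j != 0) (iota 0 j.+1)) == 0).
  apply/ev_ceq0/ev_comp; last by apply: (ev_cbounded_has (ps := j :: ps)) => //=; rewrite Hk.
  apply: evs_cons; first exact: ev_proj.
  apply: evs_cons; first exact: ev_proj.
  exact: (evs_projs O [:: j] Hk).
rewrite (ev_PMu_halts hF); split.
  move=> [j]; case: hasP => // -[t]; rewrite mem_iota add0n ltnS => Ht Htv _.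
  by exists j, t.
move=> [j [t [Ht Htv]]]; exists j; case: hasP => // -[]; exists t => //.
by rewrite mem_iota add0n ltnS.
Qed.

(** * Maxima of monotone approximations *)

Fixpoint values_below (D : Type) (g : nat -> option D) (n : nat) : seq D :=
  if n is k.+1 then (if g k is Some d then d :: values_below g k else values_below g k)
  else [::].

Lemma values_below_In (D : Type) (g : nat -> option D) n t d :
  t < n -> g t = Some d -> List.In d (values_below g n).
Proof.
elim: n => [|n IH] //; rewrite ltnS leq_eqVlt => /orP [/eqP ->|Ht] Hg /=.
  by rewrite Hg; left.
by case: (g n) => [d'|]; [right|]; apply: IH.
Qed.

Section MaxGraph.

Variables (A D : Type) (lt : D -> D -> Prop).
Hypotheses (lt_irr : forall d, ~ lt d d) (lt_trans : forall a b c, lt a b -> lt b c -> lt a c).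

(* Monotonicity makes the value set finite as soon as it has a maximal element. *)
Lemma max_graphE (f : A -> nat -> option D) x d : mono_inc lt f ->
  max_graph lt f x d <->
  (exists t, f x t = Some d) /\ ~ exists t d', f x t = Some d' /\ lt d d'.
Proof.
move=> mono; split.
  move=> [_ [Ht Hle]]; split => // -[t [d' [Hf Hlt]]].
  case: (Hle _ _ Hf) => [E|Hl]; first by subst; apply: lt_irr Hlt.
  exact: lt_irr (lt_trans Hlt Hl).
move=> [[t0 Ht0] Hn].
have above_t0 t d' : t0 <= t -> f x t = Some d' -> d' = d.
  move=> Htt Hf; case: (mono _ _ _ _ _ Htt Ht0 Hf) => // Hl.
  by case: Hn; exists t, d'.
split.
  exists (d :: values_below (f x) t0) => t d' Hf.
  case: (leqP t0 t) => Htt; last by right; apply: values_below_In Hf.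
  by left; rewrite (above_t0 t d' Htt Hf).
split; first by exists t0.
move=> t d' Hf; case: (leqP t0 t) => Htt; first by left; apply: above_t0 Hf.
exact: mono _ _ _ _ _ (ltnW Htt) Hf Ht0.
Qed.

Lemma max_graph_functional (f : A -> nat -> option D) x d1 d2 :
  max_graph lt f x d1 -> max_graph lt f x d2 -> d1 = d2.
Proof.
move=> [_ [[t1 H1] L1]] [_ [[t2 H2] L2]].
case: (L2 _ _ H1) => // l12; case: (L1 _ _ H2) => // l21.
by case: (lt_irr (lt_trans l12 l21)).
Qed.

End MaxGraph.

Lemma bool_of_prop_eq0 (P : Prop) : nat_of_bool (~~ bool_of_prop P) = 0 <-> P.
Proof. by case: bool_of_propP. Qed.

Lemma pc_rel_of_test (A D : Type) (rho : nat -> D) (rhoinv : D -> nat) (encA : A -> nat)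
    (G : A -> D -> Prop) W :
  cancel rho rhoinv -> cancel rhoinv rho ->
  (forall x m, eval halting_set W [:: m; encA x] (~~ bool_of_prop (G x (rho m)))) ->
  (forall x d1 d2, G x d1 -> G x d2 -> d1 = d2) ->
  pc_rel halting_set encA rhoinv G.
Proof.
move=> rhoK rhoinvK hW G_fun; exists (PMu W).
split; last by move=> a m _; exists (rho m); rewrite rhoK.
move=> x d; rewrite (ev_PMuP (fun m => hW x m)) bool_of_prop_eq0 rhoinvK.
split=> [[] //|Hd]; split => // m Hm /bool_of_prop_eq0 Hm'.
by move: Hm; rewrite -(G_fun _ _ _ Hm' Hd) rhoK ltnn.
Qed.

Definition cpair (A B : prog) : prog := ccons A (ccons B (cst 0)).

(* On input [[:: t; s; code x; m]], run [p] with clock [s] on the pair [(x, t)]. *)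
Definition crun_pair (p : prog) : prog :=
  PComp (clocked p 1) [:: PProj 1; cpair (PProj 2) (PProj 0)].

Lemma ev_crun_pair O p t s nx m :
  eval O (crun_pair p) [:: t; s; nx; m] (ocode (run s p [:: cons_code nx (cons_code t 0)])).
Proof.
apply: ev_comp (@clocked_correct O p 1 s [:: cons_code nx (cons_code t 0)] erefl).
apply: evs_cons; first exact: ev_proj.
apply: evs_cons (evs_nil _ _).
by apply: ev_ccons; [apply: ev_proj | apply: ev_ccons; [apply: ev_proj | apply: ev_cst]].
Qed.

Definition value_test (p : prog) : prog := ceq (crun_pair p) (csucc (PProj 3)).
(* [clocked] shifts outputs by one, so [L] answering [1] shows up as [2]. *)
Definition above_test (p L : prog) : prog := cmul (cneq0 (crun_pair p))
  (ceq (PComp (clocked L 2) [:: PProj 1; PProj 3; cpred (crun_pair p)]) (cst 2)).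

Definition max_test (p L : prog) : prog :=
  cif (cquery (csearch (value_test p) 2) (PProj 1) (PProj 0)) (cst 1)
    (cif (cquery (csearch (above_test p L) 2) (PProj 1) (PProj 0)) (cst 0) (cst 1)).

Section MaxPR.

Variables (D : Type) (lt : D -> D -> Prop) (rho : nat -> D) (rhoinv : D -> nat).
Hypotheses (rhoK : cancel rho rhoinv) (rhoinvK : cancel rhoinv rho).
Hypotheses (lt_irr : forall d, ~ lt d d) (lt_trans : forall a b c, lt a b -> lt b c -> lt a c).
Variable L : prog.
Hypothesis L_lt : forall m n, eval no_oracle L [:: m; n] 1 <-> lt (rho m) (rho n).

Variables (X : bspace) (f : bs_type X -> nat -> option D) (p : prog).
Hypothesis p_f :
  forall xt d, eval no_oracle p [:: pair_code xt] (rhoinv d) <-> f xt.1 xt.2 = Some d.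
Hypothesis f_mono : mono_inc lt f.

Lemma run_p_f s x t m :
  run s p [:: cons_code (bs_code x) (cons_code t 0)] = Some m -> f x t = Some (rho m).
Proof. by move=> /run_sound Hs; apply/(p_f (x, t)); rewrite rhoK. Qed.

Lemma halts_value_search x m :
  halts (csearch (value_test p) 2) (bs_code x) m <-> exists t, f x t = Some (rho m).
Proof.
rewrite /halts (@csearch_halts no_oracle (value_test p) 2 [:: bs_code x; m]
   (fun t s => ocode (run s p [:: cons_code (bs_code x) (cons_code t 0)]) == m.+1)) //;
  last by move=> t s; apply: ev_ceq (ev_crun_pair _ _ _ _ _ _) (ev_csucc (ev_proj _ _ _)).
split.
  move=> [j [t [_]]]; case E: (run j p _) => [y|] //=; rewrite eqSS.
  by case: (y =P m) => [<- _|_ //]; exists t; apply: run_p_f E.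
move=> [t /(p_f (x, t))]; rewrite rhoK => /run_complete [s Hs].
exists (maxn s t), t; split; first exact: leq_maxr.
by rewrite (run_mono (leq_maxl _ _) Hs) /= eqxx.
Qed.

Lemma halts_above_search x m :
  halts (csearch (above_test p L) 2) (bs_code x) m <->
  exists t d', f x t = Some d' /\ lt (rho m) d'.
Proof.
rewrite /halts (@csearch_halts no_oracle (above_test p L) 2 [:: bs_code x; m]
   (fun t s => let r := ocode (run s p [:: cons_code (bs_code x) (cons_code t 0)]) in
       (r != 0) * (ocode (run s L [:: m; r.-1]) == 2))) //; last first.
  move=> t s; apply: ev_cmul; first exact: ev_cneq0 (ev_crun_pair _ _ _ _ _ _).
  apply: ev_ceq (ev_cst _ _ _); apply: ev_comp (@clocked_correct _ L 2 s [:: m; _] erefl).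
  apply: evs_cons; first exact: ev_proj.
  apply: evs_cons; first exact: ev_proj.
  exact: evs_cons (ev_cpred (ev_crun_pair _ _ _ _ _ _)) (evs_nil _ _).
split.
  move=> [j [t [_ /=]]]; case E: (run j p _) => [y|] //=.
  case E2: (run j L _) => [[|[|z]]|] //= _.
  by exists t, (rho y); split; [apply: run_p_f E | apply/L_lt; apply: run_sound E2].
move=> [t [d' [Hf Hlt]]].
have /run_complete [s1 Hs1] := proj2 (p_f (x, t) d') Hf.
have /run_complete [s2 Hs2] : eval no_oracle L [:: m; rhoinv d'] 1 by apply/L_lt; rewrite rhoinvK.
exists (maxn (maxn s1 s2) t), t; split; first exact: leq_maxr.
have le1 : s1 <= maxn (maxn s1 s2) t by rewrite !leq_max leqnn.
have le2 : s2 <= maxn (maxn s1 s2) t by rewrite !leq_max leqnn orbT.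
by rewrite /= (run_mono le1 Hs1) /= (run_mono le2 Hs2).
Qed.

Lemma ev_max_test x m :
  eval halting_set (max_test p L) [:: m; bs_code x] (~~ bool_of_prop (max_graph lt f x (rho m))).
Proof.
have ev_q S := ev_cquery S (ev_proj halting_set 1 [:: m; bs_code x]) (ev_proj _ 0 _).
apply: eval_eq (ev_cif (ev_q _) (ev_cst _ 1 _) (ev_cif (ev_q _) (ev_cst _ 0 _) (ev_cst _ 1 _))) _.
have := max_graphE lt_irr lt_trans x (rho m) f_mono.
have := halts_value_search x m; have := halts_above_search x m.
by case: bool_of_propP => HV; case: bool_of_propP => HA; case: bool_of_propP => //=; tauto.
Qed.

Lemma max_pc_rel : pc_rel halting_set (@bs_code X) rhoinv (max_graph lt f).
Proof.
apply: pc_rel_of_test rhoK rhoinvK ev_max_test _.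
by move=> x d1 d2; apply: max_graph_functional.
Qed.

End MaxPR.

(** * Enumerating bit strings *)

(* [bitstring n i] lists the [n] lowest binary digits of [i], most significant
   first; [bit_codes n i] is the same list read as numbers. *)
Fixpoint bit_codes (n i : nat) : seq nat :=
  if n is k.+1 then nat_of_bool (odd (iter k half i)) :: bit_codes k i else [::].
Fixpoint bitstring (n i : nat) : seq 'I_2 :=
  if n is k.+1 then inord (odd (iter k half i)) :: bitstring k i else [::].

Lemma size_bitstring n i : size (bitstring n i) = n.
Proof. by elim: n => //= n ->. Qed.

Lemma bs_code_bitstring n i :
  bs_code (X := bits) (bitstring n i) = cons_code (CodeSeq.code (bit_codes n i)) 0.
Proof.
rewrite /bs_code /=; congr (2 ^ _ * _); congr CodeSeq.code.
by elim: n => //= n ->; rewrite inordK // ltnS leq_b1.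
Qed.

Definition p_odd : prog := PRec PZero (ceq0 (PProj 1)).

Lemma ev_p_odd O a : eval O p_odd [:: a] (odd a).
Proof.
have -> : nat_of_bool (odd a) = primrec 0 (fun _ z => nat_of_bool (z == 0)) a.
  by elim: a => //= a <-; case: (odd a).
by apply: ev_primrec => [|j z]; [apply: ev_zero | apply/ev_ceq0/ev_proj].
Qed.

Definition p_half : prog := PRec PZero (cadd (PProj 1) (comp1 p_odd (PProj 0))).

Lemma ev_p_half O a : eval O p_half [:: a] a./2.
Proof.
have -> : a./2 = primrec 0 (fun j z => z + odd j) a.
  by elim: a => //= a <-; rewrite uphalf_half addnC.
apply: ev_primrec => [|j z]; first exact: ev_zero.
by apply: ev_cadd; [apply: ev_proj | apply: ev_comp1 (ev_proj _ _ _) (ev_p_odd _ _)].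
Qed.

Definition p_iter_half : prog := PRec (PProj 0) (comp1 p_half (PProj 1)).

Lemma ev_p_iter_half O k i : eval O p_iter_half [:: k; i] (iter k half i).
Proof.
have -> : iter k half i = primrec i (fun _ z => z./2) k by elim: k => //= k ->.
apply: ev_primrec => [|j z]; first exact: ev_proj.
exact: ev_comp1 (ev_proj _ _ _) (ev_p_half _ _).
Qed.

Definition p_bit_codes : prog := PRec (cst 0)
  (ccons (comp1 p_odd (comp2 p_iter_half (PProj 0) (PProj 2))) (PProj 1)).

Lemma ev_p_bit_codes O n i : eval O p_bit_codes [:: n; i] (CodeSeq.code (bit_codes n i)).
Proof.
have -> : CodeSeq.code (bit_codes n i) =
    primrec 0 (fun k z => cons_code (odd (iter k half i)) z) n by elim: n => //= n <-.
apply: ev_primrec => [|j z]; first exact: ev_cst.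
apply: ev_ccons (ev_proj _ _ _); apply: ev_comp1 _ (ev_p_odd _ _).
exact: ev_comp2 (ev_proj _ _ _) (ev_proj _ _ _) (ev_p_iter_half _ _ _).
Qed.

Definition cbitstring (A B : prog) : prog := ccons (comp2 p_bit_codes A B) (cst 0).

Lemma ev_cbitstring O A B v n i : eval O A v n -> eval O B v i ->
  eval O (cbitstring A B) v (bs_code (X := bits) (bitstring n i)).
Proof.
move=> hA hB; rewrite bs_code_bitstring.
exact: ev_ccons (ev_comp2 hA hB (ev_p_bit_codes _ _ _)) (ev_cst _ _ _).
Qed.

Lemma iter_half_addl k a i : iter k half (a * 2 ^ k + i) = a + iter k half i.
Proof.
have halfDD c j : (c.*2 + j)./2 = c + j./2.
  by rewrite -{1}(odd_double_half j) addnCA -doubleD half_bit_double.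
elim: k a i => [|k IH] a i; first by rewrite /= expn0 muln1.
by rewrite !iterSr expnS mulnCA mul2n halfDD IH.
Qed.

Lemma iter_half_small k i : i < 2 ^ k -> iter k half i = 0.
Proof.
elim: k i => [|k IH] i; first by case: i.
rewrite iterSr expnS mul2n => Hi; apply: IH.
by rewrite -ltn_double -[i]odd_double_half in Hi *; move: Hi; case: (odd i) => /=; lia.
Qed.

Lemma eq_bitstring k i1 i2 :
  (forall j, j < k -> odd (iter j half i1) = odd (iter j half i2)) ->
  bitstring k i1 = bitstring k i2.
Proof. by elim: k => //= k IH H; rewrite H // IH // => j Hj; apply/H/ltnW. Qed.

Lemma bitstring_surj (w : seq 'I_2) : exists2 i, i < 2 ^ size w & bitstring (size w) i = w.
Proof.
elim: w => [|b w [i' Hi' Ew]]; first by exists 0.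
exists (b * 2 ^ size w + i').
  by rewrite /= expnS; have := ltn_ord b; nia.
rewrite /= iter_half_addl iter_half_small // addn0.
congr cons.
  apply: val_inj; rewrite /= inordK; last by rewrite ltnS leq_b1.
  by case: b => [[|[|m]] Hm].
rewrite -[RHS]Ew; apply: eq_bitstring => j Hj.
have -> : b * 2 ^ size w = (b * 2 ^ (size w - j)) * 2 ^ j.
  by rewrite -mulnA -expnD subnK // ltnW.
rewrite iter_half_addl oddD oddM oddX.
have -> : (size w - j == 0) = false by apply/eqP; lia.
by rewrite andbF.
Qed.

(** * Descriptional complexity *)

Lemma K_graph_pc_rel (D : Type) (rho : nat -> D) (rhoinv : D -> nat)
    (phi : bs_type bits -> D -> Prop) W :
  cancel rho rhoinv -> cancel rhoinv rho ->
  (forall m n, eval halting_set W [:: n; m]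
     (~~ bool_of_prop (exists w, size w = n /\ phi w (rho m)))) ->
  pc_rel halting_set rhoinv id (K_graph phi).
Proof.
move=> rhoK rhoinvK hW; exists (PMu W); split; last by move=> a m _; exists m.
move=> d n; rewrite (ev_PMuP (fun j => hW (rhoinv d) j)) bool_of_prop_eq0 rhoinvK.
split=> [[[w [Hs Hp]] Hmin]|[[p [Hs Hp]] Hle]]; split; [by exists w| |by exists p|].
- move=> p Hp'; rewrite leqNgt; apply/negP => Hlt.
  by apply: (Hmin _ Hlt); apply/bool_of_prop_eq0; exists p.
- move=> m Hm /bool_of_prop_eq0 [w [Hw Hw']].
  by have := Hle _ Hw'; rewrite Hw leqNgt Hm.
Qed.

(* On input [[:: i; s; n; m]], does [pf] output [m] within [s] steps on the
   [i]-th string of length [n]? *)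
Definition string_test (pf : prog) : prog :=
  ceq (PComp (clocked pf 1) [:: PProj 1; cbitstring (PProj 2) (PProj 0)]) (csucc (PProj 3)).

Definition length_test (pf : prog) : prog :=
  ceq0 (cquery (csearch (string_test pf) 2) (PProj 0) (PProj 1)).

Section KPartialComputable.

Variables (D : Type) (rho : nat -> D) (rhoinv : D -> nat).
Hypotheses (rhoK : cancel rho rhoinv) (rhoinvK : cancel rhoinv rho).
Variables (phi : bs_type bits -> D -> Prop) (pf : prog).
Hypothesis pf_phi : forall w d, eval no_oracle pf [:: bs_code w] (rhoinv d) <-> phi w d.

Lemma halts_string_search n m :
  halts (csearch (string_test pf) 2) n m <-> exists w, size w = n /\ phi w (rho m).
Proof.
rewrite /halts (@csearch_halts no_oracle (string_test pf) 2 [:: n; m]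
   (fun i s => ocode (run s pf [:: bs_code (X := bits) (bitstring n i)]) == m.+1)) //;
  last first.
  move=> i s; apply: ev_ceq (ev_csucc (ev_proj _ _ _)).
  apply: ev_comp (@clocked_correct _ pf 1 s [:: _] erefl).
  apply: evs_cons; first exact: ev_proj.
  by apply: evs_cons (evs_nil _ _); apply: ev_cbitstring; apply: ev_proj.
split.
  move=> [j [i [_]]]; case E: (run j pf _) => [y|] //=; rewrite eqSS.
  case: (y =P m) => [<- _|_ //]; exists (bitstring n i); split; first exact: size_bitstring.
  by apply/pf_phi; rewrite rhoK; apply: run_sound E.
move=> [w [Hw /pf_phi]]; have [i _ Ei] := bitstring_surj w.
rewrite -Ei Hw rhoK => /run_complete [s Hs].
exists (maxn s i), i; split; first exact: leq_maxr.
by rewrite (run_mono (leq_maxl _ _) Hs) /= eqxx.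
Qed.

Lemma K_graph_pc_rel_pc : pc_rel halting_set rhoinv id (K_graph phi).
Proof.
apply: (K_graph_pc_rel (W := length_test pf)) rhoK rhoinvK _ => m n.
apply: eval_eq (ev_ceq0 (ev_cquery _ (ev_proj _ 0 _) (ev_proj _ 1 _))) _.
have := halts_string_search n m.
by case: bool_of_propP => HS; case: bool_of_propP => //=; tauto.
Qed.

End KPartialComputable.

(* On input [[:: n; m]], outputs [0] iff [rho m] is the value of [max f] on some
   string of length [n]; these strings are the [bitstring n i], [i <= 2 ^ n]. *)
Definition max_length_test (p L : prog) : prog :=
  let T := ceq0 (PComp (max_test p L) [:: PProj 2; cbitstring (PProj 1) (PProj 0)]) in
  ceq0 (PComp (cbounded_has T 2) [:: cpow2 (PProj 0); PProj 0; PProj 1]).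

Section KMax.

Variables (D : Type) (lt : D -> D -> Prop) (rho : nat -> D) (rhoinv : D -> nat).
Hypotheses (rhoK : cancel rho rhoinv) (rhoinvK : cancel rhoinv rho).
Hypotheses (lt_irr : forall d, ~ lt d d) (lt_trans : forall a b c, lt a b -> lt b c -> lt a c).
Variable L : prog.
Hypothesis L_lt : forall m n, eval no_oracle L [:: m; n] 1 <-> lt (rho m) (rho n).

Lemma K_graph_pc_rel_max (U : bs_type bits -> D -> Prop) :
  in_MaxPR lt rhoinv U -> pc_rel halting_set rhoinv id (K_graph U).
Proof.
move=> [f [[p [p_f _]] [f_mono hU]]].
apply: (K_graph_pc_rel (W := max_length_test p L)) rhoK rhoinvK _ => m n.
pose is_max i := bool_of_prop (max_graph lt f (bitstring n i) (rho m)).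
have ev_T i : eval halting_set
    (ceq0 (PComp (max_test p L) [:: PProj 2; cbitstring (PProj 1) (PProj 0)])) [:: i; n; m]
    (is_max i).
  have Hmax := ev_max_test rhoK rhoinvK lt_irr lt_trans L_lt p_f f_mono (bitstring n i) m.
  apply: eval_eq (ev_ceq0 (ev_comp _ Hmax)) _; last by rewrite /is_max; case: bool_of_prop.
  apply: evs_cons; first exact: ev_proj.
  by apply: evs_cons (evs_nil _ _); apply: ev_cbitstring; apply: ev_proj.
apply: eval_eq (ev_ceq0 (ev_comp _ (ev_cbounded_has (ps := [:: n; m]) erefl ev_T _))) _.
  apply: evs_cons; first exact/ev_cpow2/ev_proj.
  apply: evs_cons; first exact: ev_proj.
  exact: evs_cons (ev_proj _ _ _) (evs_nil _ _).
congr nat_of_bool; case: bool_of_propP => [[w [Hs /hU Hw]]|Hnone].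
  rewrite eqb0; congr negb; apply/hasP.
  have [i Hi Ei] := bitstring_surj w.
  exists i; first by rewrite mem_iota add0n ltnS /= -Hs ltnW.
  by rewrite /is_max -Hs Ei; case: bool_of_propP.
rewrite eqb0; congr negb; apply/negbTE/negP => /hasP [i _]; rewrite /is_max.
case: bool_of_propP => // Hmax _; apply: Hnone.
by exists (bitstring n i); rewrite size_bitstring; split => //; apply/hU.
Qed.

End KMax.

Lemma min_graph_rev (A D : Type) (lt : D -> D -> Prop) (f : A -> nat -> option D) x d :
  min_graph lt f x d <-> max_graph (fun a b => lt b a) f x d.
Proof.
have le_rev a b : le_of lt a b <-> le_of (fun x y => lt y x) b a.
  by split => -[->|H]; [left|right|left|right].
by split=> -[H1 [H2 H3]]; split => //; split => // t d' /H3 /le_rev.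
Qed.

Lemma mono_dec_rev (A D : Type) (lt : D -> D -> Prop) (f : A -> nat -> option D) :
  mono_dec lt f -> mono_inc (fun a b => lt b a) f.
Proof.
move=> H x t t' d d' Htt E E'.
by case: (H _ _ _ _ _ Htt E E') => [->|Hl]; [left|right].
Qed.

Lemma ev_comp2_swap O L m n y :
  eval O (comp2 L (PProj 1) (PProj 0)) [:: m; n] y <-> eval O L [:: n; m] y.
Proof.
have swap : evals O [:: PProj 1; PProj 0] [:: m; n] [:: n; m] by do !constructor.
split; last by move=> H; apply: ev_comp H.
move=> H; inversion H as [| | | | |ff gg vv ws yy A B| | |]; subst.
by rewrite (evals_functional A swap) in B.
Qed.

Lemma in_MinPR_rev (X : bspace) (D : Type) (lt : D -> D -> Prop) (rhoinv : D -> nat)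
    (U : bs_type X -> D -> Prop) :
  in_MinPR lt rhoinv U -> in_MaxPR (fun a b => lt b a) rhoinv U.
Proof.
move=> [f [f_pc [f_mono hU]]]; exists f; split => //; split; first exact: mono_dec_rev.
by move=> x d; rewrite hU; apply: min_graph_rev.
Qed.

Lemma pc_rel_iff O (A B : Type) (eA : A -> nat) (eB : B -> nat) (F G : A -> B -> Prop) :
  (forall a b, F a b <-> G a b) -> pc_rel O eA eB F -> pc_rel O eA eB G.
Proof. by move=> FG [p [H1 H2]]; exists p; split => // a b; rewrite -FG. Qed.

Theorem mainTheorem13 (X : bspace) (D : Type) (lt : D -> D -> Prop)
    (rho : nat -> D) (rhoinv : D -> nat) :
  computable_poset lt rho rhoinv ->
  (forall f : bs_type X -> nat -> option D,
     pc_fun2 rhoinv f -> mono_inc lt f ->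
     pc_rel halting_set (@bs_code X) rhoinv (max_graph lt f)) /\
  (forall f : bs_type X -> nat -> option D,
     pc_fun2 rhoinv f -> mono_dec lt f ->
     pc_rel halting_set (@bs_code X) rhoinv (min_graph lt f)) /\
  (forall phi : bs_type bits -> D -> Prop,
     PC_bits rhoinv phi -> optimal_in (PC_bits rhoinv) phi ->
     pc_rel halting_set rhoinv id (K_graph phi)) /\
  (forall U : bs_type bits -> D -> Prop,
     in_MaxPR lt rhoinv U -> optimal_in (in_MaxPR lt rhoinv) U ->
     pc_rel halting_set rhoinv id (K_graph U)) /\
  (forall U : bs_type bits -> D -> Prop,
     in_MinPR lt rhoinv U -> optimal_in (in_MinPR lt rhoinv) U ->
     pc_rel halting_set rhoinv id (K_graph U)).
Proof.
move=> [rhoK rhoinvK lt_irr lt_trans [L HL]].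
have L_lt m n := (HL m n).1.
have gt_trans a b c : lt b a -> lt c b -> lt c a by move=> ab bc; apply: lt_trans bc ab.
have L_gt m n : eval no_oracle (comp2 L (PProj 1) (PProj 0)) [:: m; n] 1 <-> lt (rho n) (rho m).
  by rewrite ev_comp2_swap.
split; first by move=> f [p [p_f _]]; exact: (max_pc_rel rhoK rhoinvK lt_irr lt_trans L_lt p_f).
split.
  move=> f [p [p_f _]] /mono_dec_rev f_mono.
  apply: pc_rel_iff (fun x d => iff_sym (min_graph_rev lt f x d)) _.
  exact: (max_pc_rel (lt := fun a b => lt b a) rhoK rhoinvK lt_irr gt_trans L_gt p_f f_mono).
split; first by move=> phi [pf [pf_phi _]] _; exact: (K_graph_pc_rel_pc rhoK rhoinvK pf_phi).
split; first by move=> U U_max _; exact: (K_graph_pc_rel_max rhoK rhoinvK lt_irr lt_trans L_lt U_max).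
move=> U /in_MinPR_rev U_max _.
exact: (K_graph_pc_rel_max (lt := fun a b => lt b a) rhoK rhoinvK lt_irr gt_trans L_gt U_max).
Qed.
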